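(* Let $r,s,t,a,b,c$ be real numbers with $t\neq0$ and $\Delta(r,s,t)>0$, let $\alpha$ be the real root and $\omega_1,\omega_2$ the non-real roots of $x^3-rx^2-sx-t=0$, and let $M_{H,n}^{(3)}$, $M_{h,n}^{(3)}$ be the matrix sequences defined in the context. Let $n,m,l$ be nonnegative integers with $l\ge m$, put $\mu(m)=\alpha^{m}+\omega_{1}^{m}+\omega_{2}^{m}$ and $\sigma_{m}=t^{m}(1-\alpha^{-m})+(1-\alpha^{m})(\omega_{1}^{m}+\omega_{2}^{m}-1)$, and assume $\sigma_m\neq0$. Then $$\sum_{k=0}^{n}M_{H,mk+l}^{(3)}=\frac{1}{\sigma_{m}}\Big( M_{H,m(n+1)+l}^{(3)}-M_{H,l}^{(3)}+t^{m}M_{H,mn+l}^{(3)}-t^{m}M_{H,l-m}^{(3)}-\mu(m)M_{H,m(n+1)+l}^{(3)}+\mu(m)M_{H,l}^{(3)}+M_{H,m(n+2)+l}^{(3)}-M_{H,l+m}^{(3)}\Big),$$ and the same identity holds with every $M_{H,k}^{(3)}$ replaced by $M_{h,k}^{(3)}$.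
   Context: $\Delta(r,s,t)=\frac{r^{3}t}{27}-\frac{r^{2}s^{2}}{108}+\frac{rst}{6}-\frac{s^{3}}{27}+\frac{t^{2}}{4}$; when $\Delta>0$ the cubic has one real root and two non-real conjugate roots. The third-order Horadam matrix sequence is the sequence of $3\times3$ matrices defined by $M_{H,n+3}^{(3)}=rM_{H,n+2}^{(3)}+sM_{H,n+1}^{(3)}+tM_{H,n}^{(3)}$ ($n\ge0$) with $M_{H,0}^{(3)}=\begin{pmatrix} b & c-rb & ta\\ a & b-ra & c-rb-sa\\ \frac{1}{t}(c-rb-sa) & a-\frac{r}{t}(c-rb-sa) & \frac1t\big(-sc+(t+rs)b+(s^2-rt)a\big)\end{pmatrix}$, $M_{H,1}^{(3)}=\begin{pmatrix} c & sb+ta & tb\\ b & c-rb & ta\\ a & b-ra & c-rb-sa\end{pmatrix}$, $M_{H,2}^{(3)}=\begin{pmatrix} rc+sb+ta & sc+tb & tc\\ c & sb+ta & tb\\ b & c-rb & ta\end{pmatrix}$. The generalized Tribonacci matrix sequence satisfies the same recurrence with $M_{h,0}^{(3)}=I_3$, $M_{h,1}^{(3)}=\begin{pmatrix} r&s&t\\1&0&0\\0&1&0\end{pmatrix}$, $M_{h,2}^{(3)}=\begin{pmatrix} r^2+s&rs+t&rt\\ r&s&t\\ 1&0&0\end{pmatrix}$. *)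

From HB Require Import structures.
From mathcomp Require Import all_boot all_order all_algebra.
From mathcomp Require Export complex.
Set Implicit Arguments.
Unset Strict Implicit.
Unset Printing Implicit Defensive.
Import Order.TTheory GRing.Theory Num.Theory.
Local Open Scope ring_scope.

Definition Delta (R : fieldType) (r s t : R) : R :=
  r ^+ 3 * t / 27%:R - r ^+ 2 * s ^+ 2 / 108%:R + r * s * t / 6%:R
  - s ^+ 3 / 27%:R + t ^+ 2 / 4%:R.

Definition mx3 (R : nzRingType) (x00 x01 x02 x10 x11 x12 x20 x21 x22 : R)
  : 'M[R]_3 :=
  \matrix_(i < 3, j < 3)
    nth 0 (nth [::] [:: [:: x00; x01; x02]; [:: x10; x11; x12];
                        [:: x20; x21; x22]] i) j.

Fixpoint trip3 (R : nzRingType) (r s t : R) (X0 X1 X2 : 'M[R]_3) (n : nat)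
  : 'M[R]_3 * 'M[R]_3 * 'M[R]_3 :=
  match n with
  | 0 => (X0, X1, X2)
  | n'.+1 => let: (x, y, z) := trip3 r s t X0 X1 X2 n' in
             (y, z, r *: z + s *: y + t *: x)
  end.

Definition rec3 (R : nzRingType) (r s t : R) (X0 X1 X2 : 'M[R]_3) (n : nat)
  : 'M[R]_3 := (trip3 r s t X0 X1 X2 n).1.1.

Definition MH (R : fieldType) (r s t a b c : R) : nat -> 'M[R]_3 :=
  rec3 r s t
    (mx3 b (c - r * b) (t * a)
         a (b - r * a) (c - r * b - s * a)
         (t^-1 * (c - r * b - s * a)) (a - r / t * (c - r * b - s * a))
         (t^-1 * (- s * c + (t + r * s) * b + (s ^+ 2 - r * t) * a)))
    (mx3 c (s * b + t * a) (t * b)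
         b (c - r * b) (t * a)
         a (b - r * a) (c - r * b - s * a))
    (mx3 (r * c + s * b + t * a) (s * c + t * b) (t * c)
         c (s * b + t * a) (t * b)
         b (c - r * b) (t * a)).

Definition Mh (R : fieldType) (r s t : R) : nat -> 'M[R]_3 :=
  rec3 r s t 1%:M
    (mx3 r s t 1 0 0 0 1 0)
    (mx3 (r ^+ 2 + s) (r * s + t) (r * t) r s t 1 0 0).

From HB Require Import structures.
From mathcomp Require Import all_boot all_order all_algebra.
From mathcomp Require Import complex.
From mathcomp Require Import ring zify.
Import Order.TTheory GRing.Theory Num.Theory.
Local Open Scope ring_scope.

(* Let E be the shift operator on sequences. A sequence x with
   x_(k+3) = r x_(k+2) + s x_(k+1) + t x_k is killed by the characteristic
   polynomial (E - a)(E - w1)(E - w2), hence by its multiple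
   (E^m - a^m)(E^m - w1^m)(E^m - w2^m): every subsequence k |-> x_(mk+j)
   satisfies a third-order recurrence with characteristic roots a^m, w1^m,
   w2^m. For such a recurrence z_(k+3) = p1 z_(k+2) - p2 z_(k+1) + p3 z_k the
   partial sums telescope, (p1 - p2 + p3 - 1) (z_1 + ... + z_(n+1)) being a
   combination of boundary terms, and p1 - p2 + p3 - 1 = -(1-a^m)(1-w1^m)(1-w2^m)
   is sigma_m because a w1 w2 = t. Matrix sequences are handled entrywise. *)

Section ShiftOperator.
Context {R : comNzRingType}.
Implicit Types (p q : {poly R}) (x : nat -> R).

Definition horner_shift q x k : R := \sum_(i < size q) q`_i * x (k + i)%N.

Lemma horner_shift_widen q x k N : (size q <= N)%N ->
  horner_shift q x k = \sum_(i < N) q`_i * x (k + i)%N.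
Proof.
move=> le_qN; rewrite /horner_shift.
rewrite (big_ord_widen _ (fun i => q`_i * x (k + i)%N) le_qN) big_mkcond.
by apply: eq_bigr => i _; case: ltnP => // /(nth_default 0) ->; rewrite mul0r.
Qed.

Lemma horner_shiftD p q x k :
  horner_shift (p + q) x k = horner_shift p x k + horner_shift q x k.
Proof.
rewrite (horner_shift_widen _ _ _ _ (size_polyD p q)).
rewrite (horner_shift_widen _ _ _ _ (leq_maxl (size p) (size q))).
rewrite (horner_shift_widen _ _ _ _ (leq_maxr (size p) (size q))) -big_split.
by apply: eq_bigr => i _; rewrite coefD mulrDl.
Qed.

Lemma horner_shiftZ c q x k : horner_shift (c *: q) x k = c * horner_shift q x k.
Proof.
rewrite (horner_shift_widen _ _ _ _ (size_scale_leq c q)) /horner_shift mulr_sumr.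
by apply: eq_bigr => i _; rewrite coefZ mulrA.
Qed.

Lemma horner_shiftB p q x k :
  horner_shift (p - q) x k = horner_shift p x k - horner_shift q x k.
Proof. by rewrite horner_shiftD -scaleN1r horner_shiftZ mulN1r. Qed.

Lemma horner_shiftC c x k : horner_shift c%:P x k = c * x k.
Proof.
by rewrite (horner_shift_widen _ _ _ _ (size_polyC_leq1 c)) big_ord1 coefC addn0.
Qed.

Lemma horner_shiftXn i x k : horner_shift 'X^i x k = x (k + i)%N.
Proof.
rewrite /horner_shift size_polyXn big_ord_recr /= big1 => [|j _].
  by rewrite coefXn eqxx mul1r add0r.
by rewrite coefXn ltn_eqF // mul0r.
Qed.

Lemma horner_shiftMX q x k : horner_shift (q * 'X) x k = horner_shift q x k.+1.
Proof.
have le_qX : (size (q * 'X)%R <= (size q).+1)%N.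
  by rewrite (leq_trans (size_polyMleq _ _)) // size_polyX addn2.
rewrite (horner_shift_widen _ _ _ _ le_qX) big_ord_recl coefMX /= mul0r add0r.
by apply: eq_bigr => i _; rewrite coefMX addnS.
Qed.

Lemma horner_shiftM p q x k :
  horner_shift (p * q) x k = horner_shift p (horner_shift q x) k.
Proof.
elim/poly_ind: p k => [|p c IHp] k.
  by rewrite mul0r /horner_shift size_poly0 !big_ord0.
rewrite mulrDl horner_shiftD mulrAC horner_shiftMX IHp mul_polyC horner_shiftZ.
by rewrite horner_shiftD horner_shiftMX horner_shiftC.
Qed.

Lemma horner_shiftM_eq0 p {q x} :
  (forall k, horner_shift q x k = 0) -> forall k, horner_shift (p * q) x k = 0.
Proof.
by move=> qx0 k; rewrite horner_shiftM; apply: big1 => i _; rewrite qx0 mulr0.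
Qed.

Lemma horner_shift_rec3 {r s t x} :
  (forall k, x k.+3 = r * x k.+2 + s * x k.+1 + t * x k) ->
  forall k, horner_shift ('X^3 - r%:P * 'X^2 - s%:P * 'X - t%:P) x k = 0.
Proof.
move=> rec_x k; rewrite !horner_shiftB !mul_polyC !horner_shiftZ.
rewrite -[horner_shift 'X x k]/(horner_shift 'X^1 x k).
by rewrite !horner_shiftXn horner_shiftC addn3 addn2 addn1 rec_x; ring.
Qed.

Lemma cubic_roots_prod {r s t u1 u2 u3} :
  'X^3 - r%:P * 'X^2 - s%:P * 'X - t%:P = ('X - u1%:P) * ('X - u2%:P) * ('X - u3%:P)
    :> {poly R} ->
  t = u1 * u2 * u3.
Proof.
move=> /(congr1 (horner^~ 0)); rewrite !hornerE expr0n /=.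
rewrite !(mulr0, mul0r, subr0, sub0r, add0r) oppr0 sub0r => E.
by rewrite -[t]opprK E; ring.
Qed.

Lemma rec3_subseq {u1 u2 u3} m {x} :
  (forall k, horner_shift (('X - u1%:P) * ('X - u2%:P) * ('X - u3%:P)) x k = 0) ->
  forall k j, x (k + m * j.+3)%N =
    (u1 ^+ m + u2 ^+ m + u3 ^+ m) * x (k + m * j.+2)%N
    - (u1 ^+ m * u2 ^+ m + u1 ^+ m * u3 ^+ m + u2 ^+ m * u3 ^+ m) * x (k + m * j.+1)%N
    + u1 ^+ m * u2 ^+ m * u3 ^+ m * x (k + m * j)%N.
Proof.
move=> chi_x0 k j.
have Xn_sub_factor (u : R) : exists h, 'X^m - (u ^+ m)%:P = h * ('X - u%:P).
  by eexists; rewrite polyC_exp subrXX mulrC.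
have [h1 E1] := Xn_sub_factor u1; have [h2 E2] := Xn_sub_factor u2.
have [h3 E3] := Xn_sub_factor u3.
set A := u1 ^+ m; set B := u2 ^+ m; set C := u3 ^+ m.
have expand : ('X^m - A%:P) * ('X^m - B%:P) * ('X^m - C%:P) =
    'X^(m * 3) - (A + B + C)%:P * 'X^(m * 2) + (A * B + A * C + B * C)%:P * 'X^m
    - (A * B * C)%:P.
  by rewrite !rmorphD !rmorphM /= !exprM; ring.
have multiple : ('X^m - A%:P) * ('X^m - B%:P) * ('X^m - C%:P) =
    h1 * h2 * h3 * (('X - u1%:P) * ('X - u2%:P) * ('X - u3%:P)).
  by rewrite E1 E2 E3; ring.
have := horner_shiftM_eq0 (h1 * h2 * h3) chi_x0 (k + m * j).
rewrite -multiple expand horner_shiftB horner_shiftD horner_shiftB !mul_polyC !horner_shiftZ.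
rewrite !horner_shiftXn horner_shiftC -!addnA -!mulnDr -mulnSr addn3 addn2.
by move=> /eqP; rewrite subr_eq0 => /eqP <-; ring.
Qed.

Lemma rec3_sum {z : nat -> R} {p1 p2 p3 : R} :
  (forall k, z k.+3 = p1 * z k.+2 - p2 * z k.+1 + p3 * z k) ->
  forall n, (p1 - p2 + p3 - 1) * \sum_(k < n.+1) z k.+1 =
    z n.+2 - z 1 + p3 * z n.+1 - p3 * z 0 - p1 * z n.+2 + p1 * z 1 + z n.+3 - z 2.
Proof.
move=> rec_z; elim=> [|n IHn].
  by rewrite big_ord_recr big_ord0 /= add0r rec_z; ring.
by rewrite big_ord_recr /= mulrDr IHn (rec_z n.+1); ring.
Qed.

End ShiftOperator.

Section SubsequenceSums.
Context {K : fieldType}.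

Definition sigma3 (t u1 u2 u3 : K) m :=
  t ^+ m * (1 - u1 ^- m) + (1 - u1 ^+ m) * (u2 ^+ m + u3 ^+ m - 1).

Definition psum3 (u1 u2 u3 : K) m := u1 ^+ m + u2 ^+ m + u3 ^+ m.

Lemma sigma3E (u1 u2 u3 : K) m : u1 != 0 ->
  sigma3 (u1 * u2 * u3) u1 u2 u3 m = - ((1 - u1 ^+ m) * (1 - u2 ^+ m) * (1 - u3 ^+ m)).
Proof. by move=> u1_0; rewrite /sigma3 !exprMn; field; rewrite expf_neq0. Qed.

Lemma rec3_subseq_sum (x : nat -> K) r s t u1 u2 u3 n m l :
  t != 0 ->
  'X^3 - r%:P * 'X^2 - s%:P * 'X - t%:P = ('X - u1%:P) * ('X - u2%:P) * ('X - u3%:P) ->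
  (forall k, x k.+3 = r * x k.+2 + s * x k.+1 + t * x k) ->
  (m <= l)%N ->
  sigma3 t u1 u2 u3 m != 0 ->
  \sum_(k < n.+1) x (m * k + l)%N =
  (sigma3 t u1 u2 u3 m)^-1 *
    (x (m * n.+1 + l)%N - x l + t ^+ m * x (m * n + l)%N - t ^+ m * x (l - m)%N
     - psum3 u1 u2 u3 m * x (m * n.+1 + l)%N + psum3 u1 u2 u3 m * x l
     + x (m * n.+2 + l)%N - x (l + m)%N).
Proof.
move=> t0 charP rec_x le_ml sigma0.
have t_prod := cubic_roots_prod charP.
have u1_0 : u1 != 0 by apply: contraNneq t0 => u1_eq0; rewrite t_prod u1_eq0 !mul0r.
have chi_x0 := horner_shift_rec3 rec_x; rewrite charP in chi_x0.
pose z j := x (l - m + m * j)%N.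
have zE j : z j.+1 = x (m * j + l)%N by rewrite /z; congr x; lia.
have rec_z j : z j.+3 = psum3 u1 u2 u3 m * z j.+2
    - (u1 ^+ m * u2 ^+ m + u1 ^+ m * u3 ^+ m + u2 ^+ m * u3 ^+ m) * z j.+1
    + t ^+ m * z j.
  by rewrite /z (rec3_subseq m chi_x0) t_prod !exprMn.
apply: (mulfI sigma0); rewrite mulrA mulfV // mul1r.
have -> : \sum_(k < n.+1) x (m * k + l)%N = \sum_(k < n.+1) z k.+1.
  by apply: eq_bigr => k _; rewrite zE.
have -> : sigma3 t u1 u2 u3 m = psum3 u1 u2 u3 m
    - (u1 ^+ m * u2 ^+ m + u1 ^+ m * u3 ^+ m + u2 ^+ m * u3 ^+ m) + t ^+ m - 1.
  by rewrite t_prod sigma3E // /psum3 !exprMn; ring.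
by rewrite rec3_sum // !zE /z !muln0 add0n addn0 muln1 [(m + l)%N]addnC.
Qed.

Lemma rec3_subseq_sum_mx p q (Y : nat -> 'M[K]_(p, q)) r s t u1 u2 u3 n m l :
  t != 0 ->
  'X^3 - r%:P * 'X^2 - s%:P * 'X - t%:P = ('X - u1%:P) * ('X - u2%:P) * ('X - u3%:P) ->
  (forall k, Y k.+3 = r *: Y k.+2 + s *: Y k.+1 + t *: Y k) ->
  (m <= l)%N ->
  sigma3 t u1 u2 u3 m != 0 ->
  \sum_(k < n.+1) Y (m * k + l)%N =
  (sigma3 t u1 u2 u3 m)^-1 *:
    (Y (m * n.+1 + l)%N - Y l + t ^+ m *: Y (m * n + l)%N - t ^+ m *: Y (l - m)%N
     - psum3 u1 u2 u3 m *: Y (m * n.+1 + l)%N + psum3 u1 u2 u3 m *: Y l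
     + Y (m * n.+2 + l)%N - Y (l + m)%N).
Proof.
move=> t0 charP rec_Y le_ml sigma0; apply/matrixP => i j; rewrite summxE !mxE.
by apply: (rec3_subseq_sum (fun k => Y k i j) r s) => // k; rewrite rec_Y !mxE.
Qed.

End SubsequenceSums.

Lemma rec3S (R : nzRingType) (r s t : R) X0 X1 X2 k :
  rec3 r s t X0 X1 X2 k.+3 = r *: rec3 r s t X0 X1 X2 k.+2
    + s *: rec3 r s t X0 X1 X2 k.+1 + t *: rec3 r s t X0 X1 X2 k.
Proof. by rewrite /rec3 /=; case: (trip3 r s t X0 X1 X2 k) => [[]]. Qed.

Local Open Scope complex_scope.

Theorem theorem2p5 (R : rcfType) (r s t a b c : R) (alpha : R) (w1 w2 : R[i])
  (n m l : nat) :
  t != 0 ->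
  0 < Delta r s t ->
  ('X^3 - (r%:C)%:P * 'X^2 - (s%:C)%:P * 'X - (t%:C)%:P : {poly R[i]})
    = ('X - (alpha%:C)%:P) * ('X - w1%:P) * ('X - w2%:P) ->
  Im w1 != 0 -> Im w2 != 0 ->
  (m <= l)%N ->
  let mu : R[i] := (alpha%:C) ^+ m + w1 ^+ m + w2 ^+ m in
  let sigma : R[i] := (t%:C) ^+ m * (1 - (alpha%:C) ^- m)
                      + (1 - (alpha%:C) ^+ m) * (w1 ^+ m + w2 ^+ m - 1) in
  sigma != 0 ->
  (let X := fun k => map_mx (real_complex R) (MH r s t a b c k) in
   \sum_(k < n.+1) X (m * k + l)%N
   = sigma^-1 *: (X (m * n.+1 + l)%N - X l + (t%:C) ^+ m *: X (m * n + l)%N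
                  - (t%:C) ^+ m *: X (l - m)%N - mu *: X (m * n.+1 + l)%N
                  + mu *: X l + X (m * n.+2 + l)%N - X (l + m)%N))
  /\
  (let X := fun k => map_mx (real_complex R) (Mh r s t k) in
   \sum_(k < n.+1) X (m * k + l)%N
   = sigma^-1 *: (X (m * n.+1 + l)%N - X l + (t%:C) ^+ m *: X (m * n + l)%N
                  - (t%:C) ^+ m *: X (l - m)%N - mu *: X (m * n.+1 + l)%N
                  + mu *: X l + X (m * n.+2 + l)%N - X (l + m)%N)).
Proof.
move=> t0 _ charP _ _ le_ml mu sigma sigma0.
have t0C : t%:C != 0 by rewrite fmorph_eq0.
split=> X; apply: (rec3_subseq_sum_mx _ _ X r%:C s%:C) => // k.
  by rewrite /X /MH rec3S !map_mxD !map_mxZ.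
by rewrite /X /Mh rec3S !map_mxD !map_mxZ.
Qed.
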